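(* Let $q\in\mathbb{C}$ with $0<|q|<1$, let $N$ be a nonnegative integer and $\rho_1,\rho_2$ complex parameters (such that all terms below are well defined). Let $(\alpha_n)_{n\in\mathbb{Z}}$ and $(\beta_n)_{n\ge0}$ be sequences related by \[ \beta_n=\sum_{r=-\infty}^\infty\frac{\alpha_r}{(q)_{n-r}(q)_{n+r+1}}\qquad\text{for all } n\ge 0. \] Then \[ \sum_{n=-\infty}^\infty\frac{(\rho_1,\rho_2, q^{-N})_n}{(q^2/\rho_1, q^2/\rho_2, q^{N+2})_n} \left(\frac{q^{2+N}}{\rho_1\rho_2}\right)^n(-1)^nq^{-\binom{n}{2}}\frac{\alpha_n}{1-q} =\frac{(q^2, q^2/\rho_1\rho_2)_N}{(q^2/\rho_1, q^2/\rho_2)_N} \sum_{n\geq 0}\frac{(\rho_1, \rho_2, q^{-N})_n\,q^n\beta_n}{(\rho_1\rho_2q^{-N-1})_n}. \]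
   Context: For an integer $n$, the $q$-shifted factorial is $(a)_n=(a;q)_n$ with $(a)_0=1$, $(a)_n=(1-a)(1-aq)\cdots(1-aq^{n-1})$ for $n\ge1$, and $(a)_n=[(1-aq^{-1})(1-aq^{-2})\cdots(1-aq^{n})]^{-1}$ for $n\le -1$; in particular $1/(q)_n=0$ for $n<0$. Also $(a_1,\ldots,a_m)_n=(a_1)_n\cdots(a_m)_n$, and $\binom{n}{2}=n(n-1)/2$ for all integers $n$. *)

From mathcomp Require Import all_boot all_order all_algebra.
Set Implicit Arguments. Unset Strict Implicit. Unset Printing Implicit Defensive.
Import Order.TTheory GRing.Theory Num.Theory.
Local Open Scope ring_scope.

(* q-shifted factorial (a;q)_n for n : int.
   n >= 0 : (1-a)(1-aq)...(1-aq^(n-1));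
   n = -(k+1) < 0 : [(1-aq^-1)(1-aq^-2)...(1-aq^-(k+1))]^-1.
   (MathComp convention 0^-1 = 0 makes 1/(q;q)_n = 0 for n < 0.) *)
Definition qpoch (C : fieldType) (q a : C) (n : int) : C :=
  match n with
  | Posz k => \prod_(i < k) (1 - a * q ^+ i)
  | Negz k => (\prod_(i < k.+1) (1 - a * q ^- i.+1))^-1
  end.

Definition binom2 (n : int) : int := ((n * (n - 1)) %/ 2)%Z.

Definition zsum (C : fieldType) (M : nat) (f : int -> C) : C :=
  \sum_(i < (M + M).+1) f (i%:Z - M%:Z).

(* Write the left side as \sum_r c_r alpha_r and the right side as K \sum_n w_n beta_n.
   Substituting the Bailey relation and exchanging the two finite sums, it suffices to prove
     c_r = K \sum_n w_n / ((q)_(n-r) (q)_(n+r+1))   for every r.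
   Reflecting the q-shifted factorials of negative index gives c_(-r-1) = c_r, and the kernel
   has the same symmetry, so only r = s >= 0 matters.  For s > N both sides vanish.  For
   s <= N the shift n = s + k turns the sum into a terminating balanced 3phi2, which the
   q-Pfaff-Saalschuetz summation evaluates; the latter is proved in the polynomial form
     \sum_k [m, k] (a)_k (b)_k d^k (d)_(m-k) (abdq^k)_(m-k) = (ad)_m (bd)_m
   by induction on m, with a telescoping (WZ) certificate. *)

From mathcomp Require Import all_boot all_order all_algebra.
From mathcomp Require Import ring zify.
Import Order.TTheory GRing.Theory Num.Theory.
Set Implicit Arguments. Unset Strict Implicit. Unset Printing Implicit Defensive.
Local Open Scope ring_scope.

Ltac neq0 :=
  repeat first [ assumption | exact: oner_neq0 | (apply/andP; split) | rewrite oppr_eq0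
               | apply: mulf_neq0 | apply: invr_neq0 | apply: expf_neq0 ].

Lemma binom2_nat (s : nat) : binom2 s = 'C(s, 2).
Proof.
rewrite /binom2; case: s => [|n] //.
by rewrite -addn1 PoszD addrK -PoszM divz_nat addn1 bin2 divn2.
Qed.

Lemma binom2_Negz t : binom2 (Negz t) = binom2 t.+2.
Proof. by rewrite /binom2; congr (_ %/ _)%Z; rewrite NegzE; lia. Qed.

Lemma expr_neq1_norm_lt1 (R : numDomainType) (x : R) n :
  `|x| < 1 -> (0 < n)%N -> x ^+ n != 1.
Proof.
move=> x_lt1 n_gt0; apply/eqP => xn_eq1.
have := exprn_ilt1 n (normr_ge0 x) x_lt1.
by rewrite -normrX xn_eq1 normr1 ltxx -lt0n n_gt0.
Qed.

Section QPochhammer.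
Variables (C : fieldType) (q : C).

Definition qpochn (a : C) (n : nat) : C := \prod_(i < n) (1 - a * q ^+ i).

Lemma qpochE a n : qpoch q a n%:Z = qpochn a n.
Proof. by []. Qed.

Lemma qpochn0 a : qpochn a 0 = 1.
Proof. by rewrite /qpochn big_ord0. Qed.

Lemma qpochnS a n : qpochn a n.+1 = qpochn a n * (1 - a * q ^+ n).
Proof. by rewrite /qpochn big_ord_recr. Qed.

Lemma qpochnSl a n : qpochn a n.+1 = (1 - a) * qpochn (a * q) n.
Proof.
rewrite /qpochn big_ord_recl expr0 mulr1; congr (_ * _).
by apply: eq_bigr => i _; rewrite /= exprS mulrA.
Qed.

Lemma qpochnD a m n : qpochn a (m + n) = qpochn a m * qpochn (a * q ^+ m) n.
Proof.
elim: n => [|n IH]; first by rewrite addn0 qpochn0 mulr1.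
by rewrite addnS !qpochnS IH exprD !mulrA.
Qed.

Lemma qpochn_qX_neq0 a n :
  (forall k, (0 < k)%N -> q ^+ k != 1) -> (0 < a)%N -> qpochn (q ^+ a) n != 0.
Proof.
move=> qX_neq1 a_gt0; rewrite /qpochn prodf_seq_neq0; apply/allP => i _ /=.
by rewrite -exprD subr_eq0 eq_sym qX_neq1 // addn_gt0 a_gt0.
Qed.

Hypothesis q_neq0 : q != 0.

Lemma qpochn_rev a n : a != 0 ->
  qpochn a n = (- a) ^+ n * q ^+ 'C(n, 2) * qpochn (q / (a * q ^+ n)) n.
Proof.
move=> a_neq0; elim: n a a_neq0 => [|n IH] a a_neq0; first by rewrite !qpochn0 !expr0 !mulr1.
have aq_neq0 : a * q != 0 by neq0.
rewrite qpochnSl IH // qpochnS binS bin1 !exprS exprD -mulNr exprMn !mulrA.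
by field; neq0.
Qed.

Lemma qpoch_Negz a t : a != 0 ->
  qpoch q a (Negz t) = ((- a) ^+ t.+1 / q ^+ 'C(t.+2, 2) * qpochn (q / a) t.+1)^-1.
Proof.
move=> a_neq0; congr (_^-1); elim: t => [|t IH].
  by rewrite big_ord1 qpochnS qpochn0 /=; field; neq0.
rewrite big_ord_recr /= IH [in RHS]qpochnS (binS t.+2) bin1 exprD !exprS.
by field; neq0.
Qed.

Lemma qpoch_q_Negz t : qpoch q q (Negz t) = 0.
Proof. by rewrite /qpoch big_ord_recl /= expr1 divff // subrr mul0r invr0. Qed.

Lemma qpoch_Negz_ratio a t : a != 0 -> a != q ->
  qpoch q a (Negz t) / qpoch q (q ^+ 2 / a) (Negz t)
  = - (q / a) ^+ (t + t).+1 * (qpochn a t / qpochn (q ^+ 2 / a) t).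
Proof.
move=> a_neq0 a_neq_q.
have a_q_neq0 : a - q != 0 by rewrite subr_eq0.
have q2a_neq0 : q ^+ 2 / a != 0 by neq0.
rewrite !qpoch_Negz // invrK.
have -> : q / (q ^+ 2 / a) = a / q by field; neq0.
rewrite !qpochnSl divfK // (_ : q / a * q = q ^+ 2 / a); last by field; neq0.
(* (q^2/a)_t may vanish: freeze its inverse so that field does not ask for it to be nonzero. *)
rewrite !invfM invrK; set yi := (qpochn (q ^+ 2 / a) t)^-1.
rewrite (exprNn a) (exprNn (q ^+ 2 / a)) !expr_div_n exprAC !exprS !exprD.
by field; neq0.
Qed.

Lemma qpochn_prefix_neq0 a m n : (n <= m)%N -> qpochn a m != 0 -> qpochn a n != 0.
Proof. by move/subnKC <-; rewrite qpochnD mulf_eq0 negb_or => /andP[]. Qed.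

Lemma qpochn_qN_eq0 N n : (N < n)%N -> qpochn (q ^- N) n = 0.
Proof.
move=> ltNn; rewrite /qpochn (bigD1 (Ordinal ltNn)) //=.
by rewrite mulVf ?expf_neq0 // subrr mul0r.
Qed.

Lemma qpochn_qN N n : (n <= N)%N ->
  qpochn (q ^- N) n * qpochn q (N - n) * (- 1) ^+ n * q ^+ (N * n) = q ^+ 'C(n, 2) * qpochn q N.
Proof.
move=> lenN; have [m ->] : exists m, N = (m + n)%N by exists (N - n)%N; rewrite subnK.
rewrite addnK qpochnD qpochn_rev ?invr_neq0 ?expf_neq0 //.
have -> : q / (q ^- (m + n) * q ^+ n) = q * q ^+ m by rewrite exprD; field; neq0.
(* field does not know ((-1)^+n)^2 = 1, so split on the parity of n. *)
rewrite (exprNn (q ^- (m + n))) exprVn -exprM -signr_odd.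
by case: (odd n); rewrite ?expr0 ?expr1; field; neq0.
Qed.

Lemma qpochn_qN_weight E N n : E != 0 -> (n <= N)%N ->
  qpochn (E * q ^- N.+1) N != 0 -> qpochn q (N - n) != 0 ->
  qpochn (q ^- N) n * q ^+ n / qpochn (E * q ^- N.+1) n
  = (q ^+ 2 / E) ^+ n * qpochn (q ^+ 2 / E) (N - n) * qpochn q N
    / (qpochn q (N - n) * qpochn (q ^+ 2 / E) N).
Proof.
move=> E_neq0 lenN EN_neq0 qm_neq0; set D := q ^+ 2 / E.
have D_neq0 : D != 0 by neq0.
have rev_D k : q / (D * q ^+ k) = E * q ^- k.+1 by rewrite /D (exprS q k); field; neq0.
have DN_neq0 : qpochn D N != 0.
  by rewrite qpochn_rev // rev_D; neq0.
have En_neq0 := qpochn_prefix_neq0 lenN EN_neq0.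
have := qpochn_qN lenN.
move: qm_neq0 DN_neq0 En_neq0; have [m ->] : exists m, N = (m + n)%N.
  by exists (N - n)%N; rewrite subnK.
rewrite addnK => qm_neq0 DN_neq0 En_neq0 qN_eq.
have Dm_neq0 : qpochn D m != 0 by apply: qpochn_prefix_neq0 DN_neq0; rewrite leq_addr.
have -> : qpochn (q ^- (m + n)) n
    = q ^+ 'C(n, 2) * qpochn q (m + n) / (qpochn q m * (-1) ^+ n * q ^+ ((m + n) * n)).
  by rewrite -qN_eq; field; neq0.
rewrite (qpochnD D m n) (qpochn_rev (a := D * q ^+ m)); last by neq0.
rewrite -(mulrA D) -exprD rev_D.
have sq_n : (n * n = 'C(n, 2) + 'C(n, 2) + n)%N.
  by elim: n {lenN qN_eq En_neq0 Dm_neq0 DN_neq0 qm_neq0} => // n IH; rewrite binS bin1; nia.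
rewrite (exprNn (D * _)) (exprMn n D) -exprM mulnDl !exprD sq_n !exprD.
by field; neq0.
Qed.

Hypothesis qpochn_q_neq0 : forall n, qpochn q n != 0.

Lemma qpochn_qS_neq0 a n : qpochn (q * q ^+ a) n != 0.
Proof. by have := qpochn_q_neq0 (a + n); rewrite qpochnD mulf_eq0 negb_or => /andP[]. Qed.

Lemma qpochn_q_factor_neq0 n : 1 - q * q ^+ n != 0.
Proof. by have := qpochn_q_neq0 n.+1; rewrite qpochnS mulf_eq0 negb_or => /andP[]. Qed.

Definition qbinom m k := qpochn q m / (qpochn q k * qpochn q (m - k)).

Definition saalschutz_term a b d m k :=
  qbinom m k * qpochn a k * qpochn b k * d ^+ k * qpochn d (m - k)
  * qpochn (a * b * d * q ^+ k) (m - k).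

Lemma q_pfaff_saalschutz a b d m :
  \sum_(k < m.+1) saalschutz_term a b d m k = qpochn (a * d) m * qpochn (b * d) m.
Proof.
elim: m => [|m IH].
  by rewrite big_ord1 /saalschutz_term /qbinom !qpochn0 expr0 !mulr1 divr1.
set T := saalschutz_term a b d.
set rho := (1 - a * d * q ^+ m) * (1 - b * d * q ^+ m).
(* WZ certificate of the recurrence in m. *)
pose G k := - q ^+ (m - k) * qbinom m k * qpochn a k.+1 * qpochn b k.+1 * d ^+ k.+1
            * qpochn d (m - k) * qpochn (a * b * d * q ^+ k) (m - k).
have qm1_neq0 := qpochn_q_factor_neq0 m.
have T_first : T m.+1 0 = rho * T m 0 + G 0.
  rewrite /T /saalschutz_term /G /qbinom /rho !subn0 !qpochn0 !expr0 !mulr1 !qpochnS !qpochn0.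
  by rewrite !expr0 !mulr1 !mul1r; field; neq0.
have T_last : T m.+1 m.+1 = - G m.
  rewrite /T /saalschutz_term /G /qbinom !subnn !qpochn0 !expr0 !mulr1.
  by field; neq0.
have T_step k : (k < m)%N -> T m.+1 k.+1 = rho * T m k.+1 + (G k.+1 - G k).
  move=> ltkm; rewrite /T /saalschutz_term /G /qbinom /rho.
  have [j ->] : exists j, m = (k + j).+1 by exists (m - k.+1)%N; lia.
  rewrite !subSS subSn ?leq_addr // !addKn.
  have qk_neq0 := qpochn_q_factor_neq0 k; have qj_neq0 := qpochn_q_factor_neq0 j.
  rewrite !(qpochnS q) !(qpochnS a) !(qpochnS b) (qpochnS d j).
  rewrite (qpochnS (a * b * d * q ^+ k.+1) j) (qpochnSl (a * b * d * q ^+ k) j).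
  rewrite -[a * b * d * q ^+ k * q]mulrA -exprSr !exprS exprD.
  by field; neq0.
rewrite big_ord_recr big_ord_recl /= T_first T_last.
under eq_bigr => k _ do rewrite T_step //.
rewrite big_split -big_distrr /= -(big_mkord xpredT (fun i => G i.+1 - G i)) telescope_sumr //.
have -> : qpochn (a * d) m.+1 * qpochn (b * d) m.+1 = rho * (qpochn (a * d) m * qpochn (b * d) m).
  by rewrite !qpochnS /rho; ring.
rewrite -IH big_ord_recl; under [in RHS]eq_bigr => i _ do rewrite lift0.
rewrite /T; ring.
Qed.

End QPochhammer.

Lemma sum_ord_window (R : nmodType) (F : nat -> R) a b M : (b <= M)%N ->
    (forall n, (n < a)%N -> F n = 0) -> (forall n, (b <= n)%N -> F n = 0) ->
  \sum_(n < M) F n = \sum_(a <= n < b) F n.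
Proof.
move=> le_bM F_lt F_ge; rewrite big_geq_mkord (big_ord_widen_cond M) // [RHS]big_mkcond /=.
apply: eq_bigr => i _; have [/F_lt -> // | _] := ltnP i a.
by have [// | /F_ge ->] := ltnP i b.
Qed.

Section Bailey.
Variables (C : fieldType) (q r1 r2 : C) (N : nat).

Definition bailey_coef (n : int) : C :=
  qpoch q r1 n * qpoch q r2 n * qpoch q (q ^- N) n /
    (qpoch q (q ^+ 2 / r1) n * qpoch q (q ^+ 2 / r2) n * qpoch q (q ^+ (N + 2)) n)
  * (q ^+ (N + 2) / (r1 * r2)) ^ n * (-1) ^ n * q ^ (- binom2 n) / (1 - q).

Definition bailey_weight (n : nat) : C :=
  qpochn q r1 n * qpochn q r2 n * qpochn q (q ^- N) n * q ^+ n
  / qpochn q (r1 * r2 * q ^- N.+1) n.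

Definition bailey_kernel (n : nat) (r : int) : C :=
  (qpoch q q (n%:Z - r) * qpoch q q (n%:Z + r + 1))^-1.

Definition bailey_const : C :=
  qpochn q (q ^+ 2) N * qpochn q (q ^+ 2 / (r1 * r2)) N
  / (qpochn q (q ^+ 2 / r1) N * qpochn q (q ^+ 2 / r2) N).

Hypotheses (q_neq0 : q != 0) (r1_neq0 : r1 != 0) (r2_neq0 : r2 != 0).
Hypotheses (r1_neq_q : r1 != q) (r2_neq_q : r2 != q).
Hypothesis qpochn_q_neq0 : forall n, qpochn q q n != 0.

Lemma bailey_coef_Negz t : bailey_coef (Negz t) = bailey_coef t.
Proof.
have qN_neq0 : q ^- N != 0 by neq0.
have qN_neq_q : q ^- N != q.
  apply: contra_neq (qpochn_q_factor_neq0 qpochn_q_neq0 N) => eq_qN.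
  by rewrite -{1}eq_qN mulVf ?subrr //; neq0.
have ratios n : bailey_coef n =
    qpoch q r1 n / qpoch q (q ^+ 2 / r1) n * (qpoch q r2 n / qpoch q (q ^+ 2 / r2) n)
    * (qpoch q (q ^- N) n / qpoch q (q ^+ 2 / q ^- N) n)
    * (q ^+ (N + 2) / (r1 * r2)) ^ n * (-1) ^ n * q ^ (- binom2 n) / (1 - q).
  by rewrite /bailey_coef invrK -exprD addnC !invfM; ring.
rewrite !ratios !qpoch_Negz_ratio // binom2_Negz !binom2_nat -!exprnN !qpochE.
set z := q ^+ (N + 2) / (r1 * r2).
have z_neq0 : z != 0 by neq0.
have sign_scale : - (q / r1) ^+ (t + t).+1 * - (q / r2) ^+ (t + t).+1
    * - (q / q ^- N) ^+ (t + t).+1 * z ^ Negz t * (-1) ^ Negz t / q ^+ 'C(t.+2, 2)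
    = z ^+ t * (-1) ^+ t / q ^+ 'C(t, 2).
  rewrite /exprz invr_sign mulrNN mulrN -(exprMn _ (q / r1)) -exprMn.
  have -> : q / r1 * (q / r2) * (q / q ^- N) = z * q by rewrite /z addn2 !exprS; field; neq0.
  rewrite (binS t.+1) (binS t) !bin1 exprS (exprMn _ z q) !exprD !exprS.
  by field; neq0.
rewrite -!exprnP.
set f1 := _ / qpochn q (q ^+ 2 / r1) t; set f2 := _ / qpochn q (q ^+ 2 / r2) t.
set f3 := _ / qpochn q (q ^+ 2 / q ^- N) t.
transitivity (f1 * f2 * f3 * (z ^+ t * (-1) ^+ t / q ^+ 'C(t, 2)) / (1 - q)); last by ring.
by rewrite -sign_scale; ring.
Qed.

Lemma bailey_kernel_Negz n t : bailey_kernel n (Negz t) = bailey_kernel n t.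
Proof.
rewrite /bailey_kernel mulrC NegzE; congr (qpoch q q _ * qpoch q q _)^-1; lia.
Qed.

Lemma bailey_kernel_lt n s : (n < s)%N -> bailey_kernel n s = 0.
Proof.
move=> ltns; rewrite /bailey_kernel.
have -> : n%:Z - s%:Z = Negz (s - n.+1) by rewrite NegzE; lia.
by rewrite qpoch_q_Negz // mul0r invr0.
Qed.

Lemma bailey_weight_gt n : (N < n)%N -> bailey_weight n = 0.
Proof. by move=> ltNn; rewrite /bailey_weight qpochn_qN_eq0 // !(mulr0, mul0r). Qed.

Lemma bailey_coef_gt s : (N < s)%N -> bailey_coef s = 0.
Proof. by move=> ltNs; rewrite /bailey_coef !qpochE qpochn_qN_eq0 // !(mulr0, mul0r). Qed.

Local Notation D := (q ^+ 2 / (r1 * r2)).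

Hypothesis qpochn_r12_neq0 : qpochn q (r1 * r2 * q ^- N.+1) N != 0.

Lemma qpochn_D_neq0 : qpochn q D N != 0.
Proof.
rewrite qpochn_rev //; neq0.
by rewrite (_ : q / _ = r1 * r2 * q ^- N.+1) // (exprS q N); field; neq0.
Qed.

Lemma bailey_term_saalschutz s k : (s + k <= N)%N ->
  bailey_weight (s + k) * bailey_kernel (s + k) s
  = qpochn q r1 s * qpochn q r2 s * D ^+ s * qpochn q q N
    / (qpochn q D N * qpochn q q (s + s + 1) * qpochn q q (N - s)
       * qpochn q (q * q ^+ (s + s + 1)) (N - s))
    * saalschutz_term q (r1 * q ^+ s) (r2 * q ^+ s) D (N - s) k.
Proof.
move=> le_skN; set m := (N - s)%N.
have le_km : (k <= m)%N by rewrite /m; lia.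
have DN_neq0 := qpochn_D_neq0.
have weight := qpochn_qN_weight q_neq0 (mulf_neq0 r1_neq0 r2_neq0) le_skN qpochn_r12_neq0
  (qpochn_q_neq0 _).
have -> : bailey_weight (s + k) = qpochn q r1 (s + k) * qpochn q r2 (s + k)
    * (qpochn q (q ^- N) (s + k) * q ^+ (s + k) / qpochn q (r1 * r2 * q ^- N.+1) (s + k)).
  by rewrite /bailey_weight; ring.
have -> : bailey_kernel (s + k) s = (qpochn q q k * qpochn q q (s + s + 1 + k))^-1.
  by rewrite /bailey_kernel -!qpochE; congr (qpoch q q _ * qpoch q q _)^-1; lia.
rewrite weight (_ : N - (s + k) = m - k)%N; last by rewrite /m; lia.
rewrite /saalschutz_term /qbinom (qpochnD q r1) (qpochnD q r2) (qpochnD q q (s + s + 1)) exprD.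
have -> : r1 * q ^+ s * (r2 * q ^+ s) * D = q * q ^+ (s + s + 1) by rewrite !exprD; field; neq0.
have -> : qpochn q (q * q ^+ (s + s + 1) * q ^+ k) (m - k)
    = qpochn q (q * q ^+ (s + s + 1)) m / qpochn q (q * q ^+ (s + s + 1)) k.
  rewrite -{2}(subnKC le_km) qpochnD; field; exact: qpochn_qS_neq0.
have := qpochn_qS_neq0 qpochn_q_neq0 (s + s + 1) k.
have := qpochn_qS_neq0 qpochn_q_neq0 (s + s + 1) m.
have := qpochn_q_neq0 k; have := qpochn_q_neq0 m; have := qpochn_q_neq0 (m - k).
have := qpochn_q_neq0 (s + s + 1).
by move=> *; field; neq0.
Qed.

Hypotheses (qpochn_r1_neq0 : qpochn q (q ^+ 2 / r1) N != 0)
           (qpochn_r2_neq0 : qpochn q (q ^+ 2 / r2) N != 0).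

Lemma bailey_sum_Posz s : (s <= N)%N ->
  \sum_(s <= n < N.+1) bailey_weight n * bailey_kernel n s
  = qpochn q r1 s * qpochn q r2 s * D ^+ s * qpochn q q N
    / (qpochn q D N * qpochn q q (s + s + 1) * qpochn q q (N - s)
       * qpochn q (q * q ^+ (s + s + 1)) (N - s))
    * (qpochn q (q ^+ 2 / r2 * q ^+ s) (N - s) * qpochn q (q ^+ 2 / r1 * q ^+ s) (N - s)).
Proof.
move=> le_sN; rewrite -{1}[s]add0n big_addn big_mkord (_ : N.+1 - s = (N - s).+1)%N; last by lia.
rewrite (_ : q ^+ 2 / r2 * q ^+ s = r1 * q ^+ s * D); last by field; neq0.
rewrite (_ : q ^+ 2 / r1 * q ^+ s = r2 * q ^+ s * D); last by field; neq0.
rewrite -(q_pfaff_saalschutz q_neq0 qpochn_q_neq0) big_distrr /=.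
apply: eq_bigr => k _; rewrite addnC bailey_term_saalschutz //.
by have := ltn_ord k; lia.
Qed.

Lemma bailey_coef_Posz s : (s <= N)%N ->
  bailey_coef s = bailey_const * \sum_(s <= n < N.+1) bailey_weight n * bailey_kernel n s.
Proof.
move=> le_sN; rewrite bailey_sum_Posz //; set m := (N - s)%N.
have eN : N = (s + m)%N by rewrite /m subnKC.
have eNs : (N.+1 + s = s + s + 1 + m)%N by rewrite /m; lia.
have split_r a : qpochn q a N = qpochn q a s * qpochn q (a * q ^+ s) m by rewrite eN qpochnD.
have := qpochn_r1_neq0; rewrite split_r mulf_eq0 negb_or => /andP[r1s_neq0 r1m_neq0].
have := qpochn_r2_neq0; rewrite split_r mulf_eq0 negb_or => /andP[r2s_neq0 r2m_neq0].
have qm_neq0 := qpochn_q_neq0 m; have qs_neq0 := qpochn_q_neq0 (s + s + 1).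
have qN1_neq0 := qpochn_q_neq0 N.+1; have qNs_neq0 := qpochn_q_neq0 (N.+1 + s).
have q1_neq0 : 1 - q != 0 by have := qpochn_q_factor_neq0 qpochn_q_neq0 0; rewrite mulr1.
rewrite /bailey_coef /bailey_const !qpochE binom2_nat -exprnN -!exprnP.
rewrite (split_r (q ^+ 2 / r1)) (split_r (q ^+ 2 / r2)).
have -> : qpochn q (q ^- N) s
    = q ^+ 'C(s, 2) * qpochn q q N / (qpochn q q m * (-1) ^+ s * q ^+ (N * s)).
  by rewrite -(qpochn_qN q_neq0 le_sN) -/m; field; neq0.
have -> : qpochn q (q ^+ 2) N = qpochn q q N.+1 / (1 - q) by rewrite qpochnSl -expr2; field.
have -> : qpochn q (q ^+ (N + 2)) s = qpochn q q (N.+1 + s) / qpochn q q N.+1.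
  by rewrite qpochnD -exprS addn2 [RHS]mulrC mulKf.
have -> : qpochn q (q * q ^+ (s + s + 1)) m = qpochn q q (N.+1 + s) / qpochn q q (s + s + 1).
  by rewrite eNs qpochnD [RHS]mulrC mulKf.
rewrite (_ : (q ^+ (N + 2) / (r1 * r2)) ^+ s = q ^+ (N * s) * D ^+ s); last first.
  by rewrite exprD -mulrA exprMn -exprM.
have := qpochn_D_neq0.
by move=> *; field; neq0.
Qed.

Lemma bailey_coef_expansion M r : (N < M)%N ->
  bailey_coef r = bailey_const * \sum_(n < M) bailey_weight n * bailey_kernel n r.
Proof.
move=> ltNM.
have Posz_case (s : nat) :
    bailey_coef s = bailey_const * \sum_(n < M) bailey_weight n * bailey_kernel n s.
  have [le_sN | ltNs] := leqP s N.
    rewrite bailey_coef_Posz //.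
    rewrite (sum_ord_window (F := fun n => bailey_weight n * bailey_kernel n s) (a := s)
                            (b := N.+1)) //.
    - by move=> n ltns; rewrite bailey_kernel_lt ?mulr0.
    - by move=> n ltNn; rewrite bailey_weight_gt ?mul0r.
  rewrite bailey_coef_gt // big1 ?mulr0 // => n _.
  have [ltns | lesn] := ltnP n s; first by rewrite bailey_kernel_lt ?mulr0.
  by rewrite bailey_weight_gt ?mul0r // (leq_trans ltNs).
case: r => [s | t]; first exact: Posz_case.
rewrite bailey_coef_Negz Posz_case; congr (_ * _); apply: eq_bigr => n _.
by rewrite bailey_kernel_Negz.
Qed.

End Bailey.

Theorem corollary2p3 (C : numClosedFieldType) (q rho1 rho2 : C) (N : nat)
    (alpha : int -> C) (beta : nat -> C) :
  0 < `|q| < 1 ->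
  (* well-definedness of all terms *)
  rho1 != 0 -> rho2 != 0 ->
  (forall n : int, - (N.+1)%:Z <= n <= N%:Z ->
     qpoch q (q ^+ 2 / rho1) n != 0 /\ qpoch q (q ^+ 2 / rho2) n != 0 /\
     (n < 0 -> qpoch q rho1 n != 0 /\ qpoch q rho2 n != 0)) ->
  (forall n : nat, (n <= N)%N -> qpoch q (rho1 * rho2 * q ^- N.+1) n != 0) ->
  (* Bailey-type relation; the bilateral sum is finitely supported, and is
     written as its symmetric partial sums over any window containing the support *)
  (forall n M : nat, (n < M)%N ->
     beta n = zsum M (fun r => alpha r /
                 (qpoch q q (n%:Z - r) * qpoch q q (n%:Z + r + 1)))) ->
  forall M : nat, (N < M)%N ->
  zsum M (fun n =>
     qpoch q rho1 n * qpoch q rho2 n * qpoch q (q ^- N) n /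
       (qpoch q (q ^+ 2 / rho1) n * qpoch q (q ^+ 2 / rho2) n
          * qpoch q (q ^+ (N + 2)) n)
     * (q ^+ (N + 2) / (rho1 * rho2)) ^ n * (-1) ^ n * q ^ (- binom2 n)
     * alpha n / (1 - q))
  = qpoch q (q ^+ 2) N * qpoch q (q ^+ 2 / (rho1 * rho2)) N
      / (qpoch q (q ^+ 2 / rho1) N * qpoch q (q ^+ 2 / rho2) N)
    * \sum_(n < M) (qpoch q rho1 n * qpoch q rho2 n * qpoch q (q ^- N) n
                    * q ^+ n * beta n / qpoch q (rho1 * rho2 * q ^- N.+1) n).
Proof.
move=> /andP[q_gt0 q_lt1] r1_neq0 r2_neq0 wd_coef wd_weight bailey M ltNM.
have q_neq0 : q != 0 by rewrite -normr_gt0.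
have qpochn_q_neq0 n : qpochn q q n != 0.
  by apply: (qpochn_qX_neq0 (a := 1)) => // k; apply: expr_neq1_norm_lt1.
have /wd_coef[r1N_neq0 [r2N_neq0 _]] : - (N.+1)%:Z <= N%:Z <= N%:Z by lia.
have /wd_coef[_ [_ /(_ isT)[r1_Negz r2_Negz]]] : - (N.+1)%:Z <= Negz 0 <= N%:Z.
  by rewrite NegzE; lia.
have r1_neq_q : rho1 != q by apply: contra_neq r1_Negz => ->; exact: qpoch_q_Negz.
have r2_neq_q : rho2 != q by apply: contra_neq r2_Negz => ->; exact: qpoch_q_Negz.
have coefE := bailey_coef_expansion q_neq0 r1_neq0 r2_neq0 r1_neq_q r2_neq_q qpochn_q_neq0
  (wd_weight N (leqnn N)) r1N_neq0 r2N_neq0 _ ltNM.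
transitivity (zsum M (fun r => bailey_coef q rho1 rho2 N r * alpha r)).
  by apply: eq_bigr => i _; rewrite /bailey_coef mulrAC.
rewrite /zsum; under eq_bigr => i _ do rewrite coefE -mulrA mulr_suml.
rewrite -mulr_sumr exchange_big /=; congr (_ * _); apply: eq_bigr => n _.
rewrite mulrAC (bailey n M (ltn_ord n)) /zsum mulr_sumr; apply: eq_bigr => i _.
by rewrite /bailey_kernel -mulrA [_^-1 * _]mulrC.
Qed.
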